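(* Let $q$ be a power of the prime $p$, $n\ge 2$ and $1\le i\le n$. Suppose that $p$ does not divide both of $\binom{n}{i}$ and $\binom{n-1}{i-1}$ (i.e. $p\nmid\binom{n}{i}$ or $p\nmid\binom{n-1}{i-1}$). Then $s_{n,i}(t)$ has no nonzero root (in an algebraic closure of $\mathbb{F}_q$) of multiplicity $m>1$ with $\gcd(m,p)=\gcd(m-1,p)=1$.
   Context: For a prime power $q$ and integers $n\ge 1$, $0\le i\le n$, the $i$-th $(n,q)$-elementary symmetric polynomial is $s_{n,i}(t)=\sum_{0\le j_1<j_2<\dots<j_i\le n-1} t^{q^{j_1}+q^{j_2}+\dots+q^{j_i}}\in\mathbb{F}_p[t]$ (where $p$ is the characteristic of $\mathbb{F}_q$). By convention $s_{n,0}(t)=1$. *)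

From mathcomp Require Import all_boot all_order all_algebra.
Set Implicit Arguments. Unset Strict Implicit. Unset Printing Implicit Defensive.
Import GRing.Theory.
Local Open Scope ring_scope.

(* The i-th (n,q)-elementary symmetric polynomial
   s_{n,i}(t) = sum_{0<=j_1<...<j_i<=n-1} t^(q^j_1 + ... + q^j_i),
   as a polynomial over an arbitrary ring R (its coefficients are 0/1,
   so over a field of characteristic p this is the image of the F_p[t]
   polynomial). Subsets S of {0..n-1} with #|S| = i index the tuples
   j_1 < ... < j_i. *)
Definition s_poly (R : nzRingType) (q n i : nat) : {poly R} :=
  \sum_(S : {set 'I_n} | #|S| == i) 'X^(\sum_(j in S) q ^ (val j))%N.

From mathcomp Require Import all_boot all_order all_algebra.
Set Implicit Arguments. Unset Strict Implicit. Unset Printing Implicit Defensive.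
Import GRing.Theory.
Local Open Scope ring_scope.

(* Write q = p^k.  Every exponent of s_{n,i} is a sum of distinct powers of q,
   so in characteristic p only the monomials whose exponent contains q^0 = 1
   survive differentiation, and their derivatives are q-th powers; additivity
   of the Frobenius map then makes s_{n,i}' = G^q for some polynomial G.  If x
   were a root of s_{n,i} of multiplicity m with p not dividing m, it would be
   a root of s_{n,i}' of multiplicity m - 1, a multiple of q, so p would divide
   m - 1. *)

Lemma expr_sum_pchar (R : comNzRingType) (p k : nat) (I : Type) (r : seq I)
    (P : pred I) (F : I -> R) :
  p \in [pchar R] ->
  (\sum_(j <- r | P j) F j) ^+ (p ^ k) = \sum_(j <- r | P j) F j ^+ (p ^ k).
Proof.
move=> pcharRp; have p_prime := pcharf_prime pcharRp.
have pcharR_q : [pchar R].-nat (p ^ k)%N by rewrite prime.pnatX (pnatE _ p_prime) pcharRp.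
apply: (big_morph (fun a : R => a ^+ (p ^ k))) => [a b|]; first exact: exprDn_pchar.
by rewrite expr0n gtn_eqF ?expn_gt0 ?prime_gt0.
Qed.

Lemma deriv_Xn_pchar (R : nzRingType) (q c : nat) (b : bool) :
  q%:R = 0 :> R -> (0 < q)%N ->
  ('X^(b + q * c))^`() = if b then 'X^c ^+ q else 0 :> {poly R}.
Proof.
move=> q_eq0 q_gt0; rewrite derivXn -mulr_natr natrD.
have qc_eq0 : (q * c)%:R = 0 :> {poly R} by rewrite natrM -polyC_natr q_eq0 mul0r.
case: b => /=; first by rewrite qc_eq0 addr0 mulr1 -exprM mulnC.
by rewrite qc_eq0 add0r mulr0.
Qed.

Lemma sum_expn_split_ord0 (n q : nat) (S : {set 'I_n.+1}) :
  (\sum_(j in S) q ^ val j)%N =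
  ((ord0 \in S) + q * \sum_(j in S | j != ord0) q ^ (val j).-1)%N.
Proof.
have expn_pred (j : 'I_n.+1) : j != ord0 -> (q * q ^ (val j).-1 = q ^ val j)%N.
  move=> jn0; rewrite -expnS prednK // lt0n.
  by apply: contra jn0 => /eqP j0; apply/eqP/val_inj.
rewrite big_distrr /=; case: (boolP (ord0 \in S)) => S0.
  rewrite (bigD1 ord0 S0) /= expn0; congr (_ + _)%N.
  by apply: eq_bigr => j /andP[_ /expn_pred].
rewrite add0n; apply: eq_big => [j | j jS].
  by case: (boolP (j \in S)) => //= jS; apply/esym; apply: contraNneq S0 => <-.
by rewrite expn_pred //; apply: contraNneq S0 => <-.
Qed.

Lemma deriv_s_poly_pchar (R : comNzRingType) (p k n i : nat) :
  p \in [pchar R] -> (0 < k)%N ->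
  exists G : {poly R}, (s_poly R (p ^ k) n i)^`() = G ^+ (p ^ k).
Proof.
move=> pcharRp k_gt0.
have q_gt0 : (0 < p ^ k)%N by rewrite expn_gt0 prime_gt0 ?(pcharf_prime pcharRp).
case: n => [|n].
  exists 0; rewrite expr0n gtn_eqF //.
  by rewrite /s_poly raddf_sum big1 //= => S _; rewrite big_pred0 ?derivXn // => -[].
have q_eq0 : (p ^ k)%:R = 0 :> R by rewrite natrX pcharf0 // expr0n gtn_eqF.
pose c (S : {set 'I_n.+1}) := (\sum_(j in S | j != ord0) (p ^ k) ^ (val j).-1)%N.
exists (\sum_(S : {set 'I_n.+1} | #|S| == i) if ord0 \in S then 'X^(c S) else 0).
rewrite expr_sum_pchar ?pchar_poly // /s_poly raddf_sum /=; apply: eq_bigr => S _.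
rewrite sum_expn_split_ord0 deriv_Xn_pchar //.
by case: ifP => // _; rewrite expr0n gtn_eqF.
Qed.

Lemma mup0 (F : fieldType) (x : F) : mup x 0 = 0%N.
Proof.
by rewrite /mup; case: arg_maxnP => [|[j]]; [exact: dvdp0 | rewrite size_poly0; case: j].
Qed.

Lemma mupX (F : fieldType) (x : F) (G : {poly F}) (n : nat) :
  mup x (G ^+ n) = (n * mup x G)%N.
Proof.
have [-> | G_neq0] := eqVneq G 0.
  case: n => [|n]; first by rewrite expr0 mupNroot ?root1.
  by rewrite exprS mul0r mup0 muln0.
elim: n => [|n IHn]; first by rewrite expr0 mupNroot ?root1.
by rewrite exprS mupM ?expf_neq0 // IHn mulSn.
Qed.

Lemma mup_deriv (F : fieldType) (x : F) (f : {poly F}) :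
  (mup x f)%:R != 0 :> F -> mup x f^`() = (mup x f).-1.
Proof.
move=> m_neq0; have f_neq0 : f != 0 by apply: contraNneq m_neq0 => ->; rewrite mup0.
have [m [u u_x f_eq]] := multiplicity_XsubC f x; rewrite f_neq0 /= in u_x.
have mup_f : mup x f = m by rewrite f_eq mupMr // mup_XsubCX eqxx.
rewrite {}mup_f in m_neq0 *; case: m => [|m] in f_eq m_neq0 *.
  by rewrite eqxx in m_neq0.
pose v := u^`() * ('X - x%:P) + u *+ m.+1.
have df_eq : f^`() = v * ('X - x%:P) ^+ m.
  rewrite f_eq derivM deriv_exp derivXsubC mul1r /v mulrDl -mulrA -exprS.
  by rewrite mulrnAl -mulrnAr.
have v_x : ~~ root v x.
  rewrite /root /v hornerD hornerM hornerXsubC subrr mulr0 add0r hornerMn.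
  by rewrite -mulr_natr mulf_neq0.
by rewrite df_eq mupMr // mup_XsubCX eqxx.
Qed.

Theorem corollary3p11 (p k n i : nat) (L : closedFieldType) :
  prime p -> (0 < k)%N -> p \in [pchar L] ->
  (2 <= n)%N -> (1 <= i <= n)%N ->
  ~~ (p %| 'C(n, i))%N || ~~ (p %| 'C(n.-1, i.-1))%N ->
  forall x : L, x != 0 -> root (s_poly L (p ^ k) n i) x ->
  ~ [/\ (1 < mup x (s_poly L (p ^ k) n i))%N,
        coprime (mup x (s_poly L (p ^ k) n i)) p
      & coprime (mup x (s_poly L (p ^ k) n i)).-1 p].
Proof.
move=> p_prime k_gt0 pcharLp _ _ _ x _ _ [_ m_coprime m1_coprime].
have [G dfG] := deriv_s_poly_pchar n i pcharLp k_gt0.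
have m_neq0 : (mup x (s_poly L (p ^ k) n i))%:R != 0 :> L.
  by rewrite -(dvdn_pcharf pcharLp) -prime_coprime // coprime_sym.
have := mup_deriv m_neq0; rewrite dfG mupX => mup_df.
have : ~~ (p %| (mup x (s_poly L (p ^ k) n i)).-1)%N.
  by rewrite -prime_coprime // coprime_sym.
by rewrite -mup_df dvdn_mulr // dvdn_exp.
Qed.
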